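(* Let $r_2$ be an admissible trajectory, and let $G$, $\tau$, $T$, $e$ be as in the context. Let $G_1=\mathbb R\times(0,\infty)\times S_2$ where $S_2=\{r\in\mathbb R^3:|r|=1\}$, regarded as a $C^\infty$ manifold. Then the map $\phi:G\to G_1$, $\phi(r_1,t)=(\tau(r_1,t),T(r_1,t),e(r_1,t))$, is a bijection of $G$ onto $G_1$ with inverse $\psi(\tau,T,e)=(r_2(\tau)+Te,\ \tau+T)$, and $\phi$ is a diffeomorphism of class $C^1$. If $r_2$ is of class $C^\infty$, then $\phi$ is a $C^\infty$ diffeomorphism.
   Context: Units with $c=1$. A function $r_2:\mathbb R\to\mathbb R^3$ is an admissible trajectory if it has continuous derivatives up to order 3, $|\dot r_2(t)|<1$ for all $t$, and for every $t_1$ one has $\sup_{u\le t_1}|\dot r_2(u)|<1$ and $\sup_{u\le t_1}|\ddot r_2(u)|<\infty$. For $(r_1,t)\in\mathbb R^3\times\mathbb R$, the retarded time $\tau(r_1,t)$ is the unique $\tau\le t$ with $\tau=t-|r_1-r_2(\tau)|$; the delay is $T=t-\tau$; $G=\{(r_1,t)\in\mathbb R^3\times\mathbb R:T(r_1,t)>0\}$ is the open set of events not on the trajectory; on $G$, $e=(r_1-r_2(\tau))/T$. *)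

From Stdlib Require Import Reals Lra List ClassicalEpsilon.
From Stdlib Require Vectors.Fin.
Open Scope R_scope.

Definition R3 : Type := (R * R * R)%type.
Definition c1 (v : R3) : R := fst (fst v).
Definition c2 (v : R3) : R := snd (fst v).
Definition c3 (v : R3) : R := snd v.
Definition vadd (u v : R3) : R3 := (c1 u + c1 v, c2 u + c2 v, c3 u + c3 v).
Definition vsub (u v : R3) : R3 := (c1 u - c1 v, c2 u - c2 v, c3 u - c3 v).
Definition vscale (a : R) (v : R3) : R3 := (a * c1 v, a * c2 v, a * c3 v).
Definition vnorm (v : R3) : R := sqrt (c1 v ^ 2 + c2 v ^ 2 + c3 v ^ 2).

Fixpoint CkR (k : nat) (f : R -> R) : Prop :=
  match k with
  | O => continuity f
  | S k' => exists g : R -> R, (forall x, derivable_pt_lim f x (g x)) /\ CkR k' g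
  end.

Definition deriv3 (f : R -> R3) (t : R) (v : R3) : Prop :=
  derivable_pt_lim (fun s => c1 (f s)) t (c1 v) /\
  derivable_pt_lim (fun s => c2 (f s)) t (c2 v) /\
  derivable_pt_lim (fun s => c3 (f s)) t (c3 v).

Definition CkR3 (k : nat) (f : R -> R3) : Prop :=
  CkR k (fun s => c1 (f s)) /\ CkR k (fun s => c2 (f s)) /\ CkR k (fun s => c3 (f s)).

Definition CinfR3 (f : R -> R3) : Prop := forall k, CkR3 k f.

Definition admissible (r2 : R -> R3) : Prop :=
  exists v a j : R -> R3,
    (forall t, deriv3 r2 t (v t)) /\
    (forall t, deriv3 v t (a t)) /\
    (forall t, deriv3 a t (j t)) /\
    CkR3 0 j /\
    (forall t, vnorm (v t) < 1) /\
    (forall t1, exists c, c < 1 /\ forall u, u <= t1 -> vnorm (v u) <= c) /\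
    (forall t1, exists M, forall u, u <= t1 -> vnorm (a u) <= M).

Definition is_ret (r2 : R -> R3) (r1 : R3) (t tau : R) : Prop :=
  tau <= t /\ tau = t - vnorm (vsub r1 (r2 tau)).

Definition ret_time (r2 : R -> R3) (r1 : R3) (t : R) : R :=
  epsilon (inhabits 0) (fun tau => is_ret r2 r1 t tau).

Definition delay (r2 : R -> R3) (r1 : R3) (t : R) : R := t - ret_time r2 r1 t.

Definition inG (r2 : R -> R3) (r1 : R3) (t : R) : Prop := delay r2 r1 t > 0.

Definition edir (r2 : R -> R3) (r1 : R3) (t : R) : R3 :=
  vscale (/ delay r2 r1 t) (vsub r1 (r2 (ret_time r2 r1 t))).

Definition inG1 (p : R * R * R3) : Prop :=
  snd (fst p) > 0 /\ vnorm (snd p) = 1.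

Definition phi (r2 : R -> R3) (r1 : R3) (t : R) : R * R * R3 :=
  (ret_time r2 r1 t, delay r2 r1 t, edir r2 r1 t).

Definition psi (r2 : R -> R3) (p : R * R * R3) : R3 * R :=
  let '(tau, T, e) := p in (vadd (r2 tau) (vscale T e), tau + T).

Definition shift {n : nat} (x : Fin.t n -> R) (i : Fin.t n) (h : R) : Fin.t n -> R :=
  fun j => if Fin.eq_dec i j then x j + h else x j.

Definition open_set {n : nat} (U : (Fin.t n -> R) -> Prop) : Prop :=
  forall x, U x -> exists d, d > 0 /\
    forall y, (forall i, Rabs (y i - x i) < d) -> U y.

Definition cont_on {n : nat} (U : (Fin.t n -> R) -> Prop) (f : (Fin.t n -> R) -> R) : Prop :=
  forall x, U x -> forall eps, eps > 0 -> exists d, d > 0 /\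
    forall y, U y -> (forall i, Rabs (y i - x i) < d) -> Rabs (f y - f x) < eps.

Fixpoint Ck {n : nat} (k : nat) (U : (Fin.t n -> R) -> Prop) (f : (Fin.t n -> R) -> R) : Prop :=
  match k with
  | O => cont_on U f
  | S k' => cont_on U f /\
      forall i : Fin.t n, exists g : (Fin.t n -> R) -> R,
        (forall x, U x -> derivable_pt_lim (fun h => f (shift x i h)) 0 (g x)) /\
        Ck k' U g
  end.

Definition CkMap {n m : nat} (k : nat) (U : (Fin.t n -> R) -> Prop)
  (F : (Fin.t n -> R) -> (Fin.t m -> R)) : Prop :=
  forall j : Fin.t m, Ck k U (fun x => F x j).

Definition CinfMap {n m : nat} (U : (Fin.t n -> R) -> Prop)
  (F : (Fin.t n -> R) -> (Fin.t m -> R)) : Prop := forall k, CkMap k U F.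

Definition of_list {n : nat} (l : list R) : Fin.t n -> R :=
  fun i => nth (proj1_sig (Fin.to_nat i)) l 0.

Definition enc4 (q : R3 * R) : Fin.t 4 -> R :=
  of_list (c1 (fst q) :: c2 (fst q) :: c3 (fst q) :: snd q :: nil).
Definition dec4 (x : Fin.t 4 -> R) : R3 * R :=
  ((x Fin.F1, x (Fin.FS Fin.F1), x (Fin.FS (Fin.FS Fin.F1))),
    x (Fin.FS (Fin.FS (Fin.FS Fin.F1)))).
Definition enc5 (p : R * R * R3) : Fin.t 5 -> R :=
  of_list (fst (fst p) :: snd (fst p) :: c1 (snd p) :: c2 (snd p) :: c3 (snd p) :: nil).
Definition dec5 (y : Fin.t 5 -> R) : R * R * R3 :=
  (y Fin.F1, y (Fin.FS Fin.F1),
   (y (Fin.FS (Fin.FS Fin.F1)), y (Fin.FS (Fin.FS (Fin.FS Fin.F1))),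
    y (Fin.FS (Fin.FS (Fin.FS (Fin.FS Fin.F1)))))).

Definition G4 (r2 : R -> R3) (x : Fin.t 4 -> R) : Prop :=
  inG r2 (fst (dec4 x)) (snd (dec4 x)).
Definition G1_5 (y : Fin.t 5 -> R) : Prop := inG1 (dec5 y).

Definition phiV (r2 : R -> R3) (x : Fin.t 4 -> R) : Fin.t 5 -> R :=
  enc5 (phi r2 (fst (dec4 x)) (snd (dec4 x))).
Definition psiV (r2 : R -> R3) (y : Fin.t 5 -> R) : Fin.t 4 -> R :=
  enc4 (psi r2 (dec5 y)).

(* A map defined on the embedded submanifold S of R^n is of class C^k iff it
   locally extends to a C^k map on an open subset of R^n. *)
Definition CkMap_on_subset {n m : nat} (k : nat) (S : (Fin.t n -> R) -> Prop)
  (F : (Fin.t n -> R) -> (Fin.t m -> R)) : Prop :=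
  forall y, S y -> exists (V : (Fin.t n -> R) -> Prop) (Fe : (Fin.t n -> R) -> (Fin.t m -> R)),
    open_set V /\ V y /\ CkMap k V Fe /\ (forall z, V z -> S z -> Fe z = F z).

Definition CinfMap_on_subset {n m : nat} (S : (Fin.t n -> R) -> Prop)
  (F : (Fin.t n -> R) -> (Fin.t m -> R)) : Prop :=
  forall y, S y -> exists (V : (Fin.t n -> R) -> Prop) (Fe : (Fin.t n -> R) -> (Fin.t m -> R)),
    open_set V /\ V y /\ CinfMap V Fe /\ (forall z, V z -> S z -> Fe z = F z).

From Pilot Require Import Defs.
From Stdlib Require Import Reals Lra Lia ClassicalEpsilon FunctionalExtensionality.
(* Stdlib's Reals also exports a [c1]; re-import to get the coordinates of [R3]. *)
Import Defs.
Open Scope R_scope.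

(* The retarded time tau(r1, t) is the unique zero on (-oo, t] of the gap
   s |-> t - s - |r1 - r2(s)|, which decreases with slope at least 1 - c > 0
   as long as |r2'| <= c < 1; this gives existence, uniqueness and Lipschitz
   continuity of tau, and the bijection G <-> G1 is then pure algebra.
   Along a coordinate line tau satisfies (t - tau)^2 = |r1 - r2(tau)|^2;
   dividing the increment of this identity by h yields the partial derivatives
   dtau = (dt T - dr.w) / (T - w.r2'(tau))  with  w = r1 - r2(tau) = T e,
   whose denominator is positive because |r2'| < 1.  Hence every partial
   derivative of phi is a rational expression in the coordinates, tau and the
   derivatives of r2 at tau; such expressions are closed under partial
   differentiation, so induction on k shows that phi is C^k when r2 is.
   The inverse psi is polynomial in the coordinates and r2(tau). *)

Lemma derivable_pt_lim_congr (f g : R -> R) x l l' :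
  (forall y, f y = g y) -> l = l' -> derivable_pt_lim f x l -> derivable_pt_lim g x l'.
Proof. intros Hfg <- H. exact (derivable_pt_lim_ext f g x l Hfg H). Qed.

Lemma derivable_pt_lim_inv f x l : derivable_pt_lim f x l -> f x <> 0 ->
  derivable_pt_lim (fun y => / f y) x (- l / (f x * f x)).
Proof.
  intros H Hn.
  pose proof (derivable_pt_lim_div (fun _ => 1) f x 0 l
    (derivable_pt_lim_const 1 x) H Hn) as K.
  eapply derivable_pt_lim_congr; [| | exact K].
  - intros y; cbv [div_fct]; unfold Rdiv; ring.
  - unfold Rsqr; field; auto.
Qed.

Lemma continuity_pt_cst a x : continuity_pt (fun _ => a) x.
Proof. apply continuity_pt_const. intros u w; reflexivity. Qed.

Lemma continuity_pt_var x : continuity_pt (fun y => y) x.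
Proof. apply derivable_continuous_pt. exists 1. exact (derivable_pt_lim_id x). Qed.

Lemma continuity_pt_of_derivable_pt_lim f x l :
  derivable_pt_lim f x l -> continuity_pt f x.
Proof. intros H. apply derivable_continuous_pt. exists l; exact H. Qed.

Lemma continuity_pt_eps f x : continuity_pt f x <->
  forall eps, eps > 0 -> exists d, d > 0 /\
    forall y, Rabs (y - x) < d -> Rabs (f y - f x) < eps.
Proof.
  split; intros H eps Heps; destruct (H eps Heps) as [d [Hd Hy]];
    exists d; split; auto.
  - intros y Hyx. destruct (Req_dec y x) as [->|Hne].
    + unfold Rminus; rewrite Rplus_opp_r, Rabs_R0; auto.
    + apply (Hy y). split; [split; [exact I | congruence] | exact Hyx].
  - intros y [_ Hyd]. apply Hy; exact Hyd.
Qed.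

(* The difference quotient of [s] at 0 equals [- A h / B h] wherever
   [B h <> 0], hence near 0. *)
Lemma derivable_pt_lim_implicit (s A B : R -> R) :
  (forall h, h * A h + (s h - s 0) * B h = 0) ->
  continuity_pt A 0 -> continuity_pt B 0 -> B 0 <> 0 ->
  derivable_pt_lim s 0 (- A 0 / B 0).
Proof.
  intros Hid HA HB HB0 eps Heps.
  assert (Hq : continuity_pt (fun h => - A h * / B h) 0).
  { apply continuity_pt_mult; [|apply continuity_pt_inv; auto].
    apply (continuity_pt_opp A); auto. }
  destruct (proj1 (continuity_pt_eps _ _) Hq eps Heps) as [d1 [Hd1 H1]].
  assert (HBa : Rabs (B 0) > 0) by (apply Rabs_pos_lt; auto).
  destruct (proj1 (continuity_pt_eps _ _) HB (Rabs (B 0)) HBa) as [d2 [Hd2 H2]].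
  exists (mkposreal _ (Rmin_pos _ _ Hd1 Hd2)). intros h Hh0 Hh. simpl in Hh.
  rewrite <- (Rminus_0_r h) in Hh.
  specialize (H1 h (Rlt_le_trans _ _ _ Hh (Rmin_l _ _))).
  specialize (H2 h (Rlt_le_trans _ _ _ Hh (Rmin_r _ _))).
  assert (HBh : B h <> 0).
  { intros Z. rewrite Z, Rminus_0_l, Rabs_Ropp in H2. lra. }
  replace ((s (0 + h) - s 0) / h) with (- A h * / B h).
  - exact H1.
  - rewrite Rplus_0_l. specialize (Hid h). field_simplify_eq; auto. nra.
Qed.

Lemma difference_quotient_continuous f a l :
  derivable_pt_lim f a l ->
  continuity_pt (fun u => if Req_EM_T u a then l else (f u - f a) / (u - a)) a.
Proof.
  intros H. apply continuity_pt_eps. intros eps Heps.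
  destruct (H eps Heps) as [d Hd]. exists d; split; [apply cond_pos|].
  intros y Hy. destruct (Req_EM_T a a) as [_|C]; [|congruence].
  destruct (Req_EM_T y a) as [->|Hne].
  - unfold Rminus; rewrite Rplus_opp_r, Rabs_R0; auto.
  - specialize (Hd (y - a) ltac:(lra) Hy).
    replace (a + (y - a)) with y in Hd by ring. exact Hd.
Qed.

(** * Vectors in R^3 *)

Definition dot (u w : R3) : R := c1 u * c1 w + c2 u * c2 w + c3 u * c3 w.

Lemma vnorm_nonneg u : 0 <= vnorm u.
Proof. apply sqrt_pos. Qed.

Lemma vnorm_sqr u : vnorm u * vnorm u = dot u u.
Proof.
  unfold vnorm. rewrite sqrt_sqrt.
  - unfold dot; ring.
  - pose proof (pow2_ge_0 (c1 u)); pose proof (pow2_ge_0 (c2 u));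
      pose proof (pow2_ge_0 (c3 u)); lra.
Qed.

Lemma vnorm_ext u w : c1 u = c1 w -> c2 u = c2 w -> c3 u = c3 w -> vnorm u = vnorm w.
Proof. intros H1 H2 H3; unfold vnorm; rewrite H1, H2, H3; reflexivity. Qed.

Lemma sqrt_le_of_le_sqr a b : 0 <= b -> a <= b * b -> sqrt a <= b.
Proof. intros. rewrite <- (sqrt_square b) by auto. apply sqrt_le_1_alt; auto. Qed.

Lemma dot_cauchy_schwarz u w : Rabs (dot u w) <= vnorm u * vnorm w.
Proof.
  pose proof (vnorm_nonneg u); pose proof (vnorm_nonneg w).
  rewrite <- (Rabs_pos_eq (vnorm u * vnorm w)) by nra.
  apply Rsqr_le_abs_0. unfold Rsqr.
  replace (vnorm u * vnorm w * (vnorm u * vnorm w))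
    with (vnorm u * vnorm u * (vnorm w * vnorm w)) by ring.
  rewrite !vnorm_sqr. unfold dot.
  destruct u as [[a b] c]; destruct w as [[d e] f]; unfold c1, c2, c3; simpl.
  (* Lagrange's identity *)
  pose proof (pow2_ge_0 (a*e-b*d)); pose proof (pow2_ge_0 (a*f-c*d));
    pose proof (pow2_ge_0 (b*f-c*e)).
  nra.
Qed.

Lemma vnorm_triangle u w : vnorm (vadd u w) <= vnorm u + vnorm w.
Proof.
  pose proof (vnorm_nonneg u); pose proof (vnorm_nonneg w).
  unfold vnorm at 1. apply sqrt_le_of_le_sqr; [lra|].
  pose proof (vnorm_sqr u); pose proof (vnorm_sqr w).
  pose proof (dot_cauchy_schwarz u w). pose proof (Rle_abs (dot u w)).
  destruct u as [[a b] c]; destruct w as [[d e] f].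
  unfold dot, vadd, c1, c2, c3 in *; simpl in *. nra.
Qed.

Lemma vnorm_sub_triangle a b c : vnorm (vsub a c) <= vnorm (vsub a b) + vnorm (vsub b c).
Proof.
  eapply Rle_trans; [| apply vnorm_triangle].
  right; apply vnorm_ext; unfold vsub, vadd, c1, c2, c3; simpl; ring.
Qed.

Lemma vnorm_sub_comm a b : vnorm (vsub a b) = vnorm (vsub b a).
Proof. unfold vnorm, vsub, c1, c2, c3; simpl. f_equal. ring. Qed.

Lemma vnorm_scale a u : vnorm (vscale a u) = Rabs a * vnorm u.
Proof.
  unfold vnorm, vscale, c1, c2, c3; simpl.
  rewrite <- sqrt_Rsqr_abs, <- sqrt_mult_alt by apply Rle_0_sqr.
  f_equal. unfold Rsqr; ring.
Qed.

Lemma vnorm_le_sum_abs u : vnorm u <= Rabs (c1 u) + Rabs (c2 u) + Rabs (c3 u).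
Proof.
  pose proof (Rabs_pos (c1 u)); pose proof (Rabs_pos (c2 u)); pose proof (Rabs_pos (c3 u)).
  unfold vnorm. apply sqrt_le_of_le_sqr; [lra|].
  rewrite <- (pow2_abs (c1 u)), <- (pow2_abs (c2 u)), <- (pow2_abs (c3 u)). nra.
Qed.

Lemma vadd_scale0 r1 dr : vadd r1 (vscale 0 dr) = r1.
Proof.
  destruct r1 as [[a b] c]. unfold vadd, vscale, c1, c2, c3; simpl.
  repeat f_equal; ring.
Qed.

Definition coord (c : nat) (u : R3) : R :=
  match c with 0%nat => c1 u | 1%nat => c2 u | _ => c3 u end.

(** * Retarded time *)

Section RetardedTime.
Variable r2 v : R -> R3.
Hypothesis r2_deriv : forall t, deriv3 r2 t (v t).
Hypothesis speed_bounded :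
  forall t1, exists c, c < 1 /\ forall u, u <= t1 -> vnorm (v u) <= c.

Lemma r2_c1_continuous t : continuity_pt (fun s => c1 (r2 s)) t.
Proof. apply (continuity_pt_of_derivable_pt_lim _ _ _ (proj1 (r2_deriv t))). Qed.
Lemma r2_c2_continuous t : continuity_pt (fun s => c2 (r2 s)) t.
Proof. apply (continuity_pt_of_derivable_pt_lim _ _ _ (proj1 (proj2 (r2_deriv t)))). Qed.
Lemma r2_c3_continuous t : continuity_pt (fun s => c3 (r2 s)) t.
Proof. apply (continuity_pt_of_derivable_pt_lim _ _ _ (proj2 (proj2 (r2_deriv t)))). Qed.

Lemma dot_r2_derivative w t :
  derivable_pt_lim (fun s => dot w (r2 s)) t (dot w (v t)).
Proof.
  destruct (r2_deriv t) as [H1 [H2 H3]]. unfold dot.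
  eapply derivable_pt_lim_congr; [intros; reflexivity | |
    apply derivable_pt_lim_plus; [apply derivable_pt_lim_plus|];
      (apply derivable_pt_lim_mult; [apply derivable_pt_lim_const|]); eassumption].
  simpl. ring.
Qed.

Lemma r2_lipschitz c t1 : (forall u, u <= t1 -> vnorm (v u) <= c) ->
  forall s1 s2, s1 <= s2 <= t1 -> vnorm (vsub (r2 s2) (r2 s1)) <= c * (s2 - s1).
Proof.
  intros Hc s1 s2 Hs.
  assert (Hc0 : 0 <= c) by (eapply Rle_trans; [apply vnorm_nonneg | apply (Hc t1); lra]).
  set (w := vsub (r2 s2) (r2 s1)).
  destruct (Req_dec s1 s2) as [<-|Hne].
  - replace (vnorm w) with (Rabs 0 * vnorm w).
    + rewrite Rabs_R0. lra.
    + rewrite <- vnorm_scale. apply vnorm_ext; unfold w, vscale, vsub, c1, c2, c3; simpl; ring.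
  - (* mean value theorem for s |-> w . r2(s) *)
    destruct (MVT_cor2 (fun s => dot w (r2 s)) (fun s => dot w (v s)) s1 s2)
      as [xi [Hxi Hxr]]; [lra | intros; apply dot_r2_derivative |].
    assert (E : dot w (r2 s2) - dot w (r2 s1) = vnorm w * vnorm w).
    { rewrite vnorm_sqr. unfold w, dot, vsub, c1, c2, c3; simpl. ring. }
    rewrite E in Hxi.
    pose proof (dot_cauchy_schwarz w (v xi)); pose proof (Rle_abs (dot w (v xi))).
    pose proof (Hc xi ltac:(lra)).
    pose proof (vnorm_nonneg w); pose proof (vnorm_nonneg (v xi)).
    assert (vnorm w * vnorm w <= vnorm w * vnorm (v xi) * (s2 - s1))
      by (rewrite Hxi; apply Rmult_le_compat_r; lra).
    assert (vnorm w * vnorm (v xi) <= vnorm w * c) by (apply Rmult_le_compat_l; lra).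
    assert (vnorm w * vnorm w <= vnorm w * (c * (s2 - s1))) by nra.
    destruct (Req_dec (vnorm w) 0) as [Z|Z]; [rewrite Z; nra|].
    apply (Rmult_le_reg_l (vnorm w)); lra.
Qed.

Definition retard_gap (r1 : R3) (t s : R) : R := t - s - vnorm (vsub r1 (r2 s)).

Lemma retard_gap_decrease r1 t c t1 : (forall u, u <= t1 -> vnorm (v u) <= c) ->
  forall s1 s2, s1 <= s2 <= t1 ->
  (1 - c) * (s2 - s1) <= retard_gap r1 t s1 - retard_gap r1 t s2.
Proof.
  intros Hc s1 s2 Hs. pose proof (r2_lipschitz c t1 Hc s1 s2 Hs).
  pose proof (vnorm_sub_triangle r1 (r2 s2) (r2 s1)). unfold retard_gap. lra.
Qed.

Lemma retard_gap_continuous r1 t : continuity (retard_gap r1 t).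
Proof.
  intros s. unfold retard_gap, vnorm, vsub, c1, c2, c3; simpl.
  apply continuity_pt_minus;
    [apply continuity_pt_minus; [apply continuity_pt_cst | apply continuity_pt_var]|].
  apply (continuity_pt_comp _ sqrt);
    [| apply continuity_pt_sqrt; repeat apply Rplus_le_le_0_compat; apply pow2_ge_0].
  repeat apply continuity_pt_plus; apply (continuity_pt_comp _ (fun z => z ^ 2));
    try (apply derivable_continuous_pt, derivable_pt_pow);
    apply continuity_pt_minus; try apply continuity_pt_cst;
    first [apply r2_c1_continuous | apply r2_c2_continuous | apply r2_c3_continuous].
Qed.

Lemma is_ret_iff r1 t s : is_ret r2 r1 t s <-> s <= t /\ retard_gap r1 t s = 0.
Proof. unfold is_ret, retard_gap. split; intros [H1 H2]; split; lra. Qed.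

Lemma is_ret_exists r1 t : exists s, is_ret r2 r1 t s.
Proof.
  destruct (speed_bounded t) as [c [Hc1 Hc]].
  set (L := vnorm (vsub r1 (r2 t)) / (1 - c)).
  assert (HL : 0 <= L)
    by (apply Rmult_le_pos; [apply vnorm_nonneg | left; apply Rinv_0_lt_compat; lra]).
  assert (Hg1 : retard_gap r1 t t <= 0)
    by (unfold retard_gap; pose proof (vnorm_nonneg (vsub r1 (r2 t))); lra).
  assert (Hg2 : 0 <= retard_gap r1 t (t - L)).
  { pose proof (retard_gap_decrease r1 t c t Hc (t - L) t ltac:(lra)).
    assert ((1 - c) * L = vnorm (vsub r1 (r2 t))) by (unfold L; field; lra).
    unfold retard_gap at 2 in H. lra. }
  destruct (IVT_cor (retard_gap r1 t) (t - L) t (retard_gap_continuous r1 t)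
    ltac:(lra) ltac:(nra)) as [z [Hz1 Hz2]].
  exists z. apply is_ret_iff. split; [lra | auto].
Qed.

Lemma is_ret_unique r1 t s1 s2 : is_ret r2 r1 t s1 -> is_ret r2 r1 t s2 -> s1 = s2.
Proof.
  intros H1 H2. apply is_ret_iff in H1; apply is_ret_iff in H2.
  destruct (speed_bounded t) as [c [Hc1 Hc]].
  destruct (Rle_dec s1 s2).
  - pose proof (retard_gap_decrease r1 t c t Hc s1 s2 ltac:(lra)). nra.
  - pose proof (retard_gap_decrease r1 t c t Hc s2 s1 ltac:(lra)). nra.
Qed.

Lemma ret_time_spec r1 t : is_ret r2 r1 t (ret_time r2 r1 t).
Proof. unfold ret_time. apply epsilon_spec, is_ret_exists. Qed.

Lemma ret_time_eq r1 t s : is_ret r2 r1 t s -> ret_time r2 r1 t = s.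
Proof. apply is_ret_unique, ret_time_spec. Qed.

Definition ret_sep (r1 : R3) (t : R) : R3 := vsub r1 (r2 (ret_time r2 r1 t)).

Lemma vnorm_ret_sep r1 t : vnorm (ret_sep r1 t) = delay r2 r1 t.
Proof. destruct (ret_time_spec r1 t) as [_ H]. unfold ret_sep, delay. lra. Qed.

Lemma phi_in_G1 r1 t : inG r2 r1 t -> inG1 (phi r2 r1 t).
Proof.
  unfold inG, inG1, phi, edir; simpl. intros HT. split; auto.
  rewrite vnorm_scale. fold (ret_sep r1 t). rewrite vnorm_ret_sep, Rabs_pos_eq.
  - field. lra.
  - left. apply Rinv_0_lt_compat. lra.
Qed.

Lemma phi_psi p : inG1 p ->
  inG r2 (fst (psi r2 p)) (snd (psi r2 p)) /\ phi r2 (fst (psi r2 p)) (snd (psi r2 p)) = p.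
Proof.
  destruct p as [[tau T] [[e1 e2] e3]]. unfold inG1; simpl. intros [HT He].
  assert (Hr : is_ret r2 (vadd (r2 tau) (vscale T (e1, e2, e3))) (tau + T) tau).
  { split; [lra|].
    replace (vnorm (vsub (vadd (r2 tau) (vscale T (e1, e2, e3))) (r2 tau)))
      with (vnorm (vscale T (e1, e2, e3))).
    - rewrite vnorm_scale, He, Rabs_pos_eq; lra.
    - apply vnorm_ext; unfold vsub, vadd, vscale, c1, c2, c3; simpl; ring. }
  pose proof (ret_time_eq _ _ _ Hr) as Eq.
  assert (Hd : delay r2 (vadd (r2 tau) (vscale T (e1, e2, e3))) (tau + T) = T)
    by (unfold delay; rewrite Eq; ring).
  unfold inG, phi, edir. rewrite Hd, Eq. split; [lra|].
  unfold vscale, vsub, vadd, c1, c2, c3; simpl.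
  repeat f_equal; field; lra.
Qed.

Lemma psi_phi r1 t : inG r2 r1 t -> psi r2 (phi r2 r1 t) = (r1, t).
Proof.
  unfold inG, phi, psi, edir, delay. intros HT.
  destruct r1 as [[a b] c]. unfold vscale, vsub, vadd, c1, c2, c3; simpl.
  repeat f_equal; field; lra.
Qed.

Lemma ret_time_continuous r1 t eps : eps > 0 -> exists d, d > 0 /\
  forall r1' t', vnorm (vsub r1' r1) < d -> Rabs (t' - t) < d ->
  Rabs (ret_time r2 r1' t' - ret_time r2 r1 t) < eps.
Proof.
  intros Heps. destruct (speed_bounded (t + 1)) as [c [Hc1 Hc]].
  set (d := Rmin 1 (eps * (1 - c) / 2)).
  assert (Hd1 : d <= 1) by apply Rmin_l.
  assert (Hd2 : d <= eps * (1 - c) / 2) by apply Rmin_r.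
  exists d. split.
  { apply Rmin_pos; [lra|]. apply Rmult_lt_0_compat; [|lra]. apply Rmult_lt_0_compat; lra. }
  intros r1' t' Hr Ht. apply Rabs_def2 in Ht.
  set (s := ret_time r2 r1 t). set (s' := ret_time r2 r1' t').
  destruct (proj1 (is_ret_iff _ _ _) (ret_time_spec r1 t)) as [Hs1 Hs2]. fold s in Hs1, Hs2.
  destruct (proj1 (is_ret_iff _ _ _) (ret_time_spec r1' t')) as [Hs1' Hs2']. fold s' in Hs1', Hs2'.
  (* s' nearly solves the equation for (r1, t) ... *)
  assert (Hg : Rabs (retard_gap r1 t s') < 2 * d).
  { pose proof (vnorm_sub_triangle r1' r1 (r2 s')).
    pose proof (vnorm_sub_triangle r1 r1' (r2 s')). rewrite (vnorm_sub_comm r1 r1') in H0.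
    unfold retard_gap in *. apply Rabs_def1; lra. }
  (* ... and the gap grows at rate 1 - c away from its zero s *)
  assert (Hm : (1 - c) * Rabs (s' - s) <= Rabs (retard_gap r1 t s')).
  { destruct (Rle_dec s s').
    - pose proof (retard_gap_decrease r1 t c (t + 1) Hc s s' ltac:(lra)).
      rewrite Rabs_pos_eq by lra. rewrite <- Rabs_Ropp, Rabs_pos_eq; nra.
    - pose proof (retard_gap_decrease r1 t c (t + 1) Hc s' s ltac:(lra)).
      rewrite Rabs_left, Rabs_pos_eq by nra. lra. }
  apply (Rmult_lt_reg_l (1 - c)); [lra|]. nra.
Qed.

Definition ret_denom (r1 : R3) (t : R) : R :=
  delay r2 r1 t - dot (ret_sep r1 t) (v (ret_time r2 r1 t)).

Lemma ret_denom_pos r1 t : inG r2 r1 t -> ret_denom r1 t > 0.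
Proof.
  unfold inG, ret_denom. intros HT. set (s0 := ret_time r2 r1 t).
  destruct (speed_bounded s0) as [c [Hc1 Hc]]. pose proof (Hc s0 (Rle_refl _)).
  pose proof (dot_cauchy_schwarz (ret_sep r1 t) (v s0)).
  pose proof (Rle_abs (dot (ret_sep r1 t) (v s0))).
  pose proof (vnorm_nonneg (v s0)). rewrite vnorm_ret_sep in H0. nra.
Qed.

Lemma ret_time_line_continuous r1 t dr dt :
  continuity_pt (fun h => ret_time r2 (vadd r1 (vscale h dr)) (t + h * dt)) 0.
Proof.
  apply continuity_pt_eps. intros eps Heps.
  destruct (ret_time_continuous r1 t eps Heps) as [d [Hd Hc]].
  set (K := vnorm dr + Rabs dt + 1).
  pose proof (vnorm_nonneg dr); pose proof (Rabs_pos dt).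
  exists (d / K). split; [apply Rdiv_lt_0_compat; unfold K; lra|].
  intros h Hh. rewrite Rminus_0_r in Hh.
  rewrite Rmult_0_l, Rplus_0_r, vadd_scale0.
  assert (HhK : Rabs h * K < d).
  { apply (Rmult_lt_compat_r K) in Hh; [|unfold K; lra].
    unfold Rdiv in Hh. rewrite Rmult_assoc, Rinv_l in Hh; unfold K in *; lra. }
  pose proof (Rabs_pos h). unfold K in HhK.
  apply Hc.
  - replace (vnorm (vsub (vadd r1 (vscale h dr)) r1)) with (vnorm (vscale h dr)).
    + rewrite vnorm_scale. nra.
    + apply vnorm_ext; unfold vsub, vadd, vscale, c1, c2, c3; simpl; ring.
  - replace (t + h * dt - t) with (h * dt) by ring. rewrite Rabs_mult. nra.
Qed.

Definition light_cone (r1 : R3) (t s : R) : R :=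
  (t - s) * (t - s) - dot (vsub r1 (r2 s)) (vsub r1 (r2 s)).

Lemma light_cone_derivative r1 t s : derivable_pt_lim (light_cone r1 t) s
   (-2 * (t - s) + 2 * dot (vsub r1 (r2 s)) (v s)).
Proof.
  destruct (r2_deriv s) as [H1 [H2 H3]].
  unfold light_cone, dot, vsub, c1, c2, c3 in *; simpl in *.
  eapply derivable_pt_lim_congr; [intros; reflexivity | |].
  2:{ apply derivable_pt_lim_minus; [|apply derivable_pt_lim_plus; [apply derivable_pt_lim_plus|]];
      apply derivable_pt_lim_mult;
      apply derivable_pt_lim_minus; try apply derivable_pt_lim_const;
      first [apply derivable_pt_lim_id | eassumption]. }
  simpl. ring.
Qed.

Lemma light_cone_ret_time r1 t : light_cone r1 t (ret_time r2 r1 t) = 0.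
Proof.
  unfold light_cone. rewrite <- vnorm_sqr. fold (ret_sep r1 t).
  rewrite vnorm_ret_sep. unfold delay. ring.
Qed.

Definition light_cone_slope (r1 : R3) (t u : R) : R :=
  let s0 := ret_time r2 r1 t in
  if Req_EM_T u s0 then -2 * ret_denom r1 t
  else (light_cone r1 t u - light_cone r1 t s0) / (u - s0).

Lemma light_cone_factor r1 t u :
  light_cone r1 t u = (u - ret_time r2 r1 t) * light_cone_slope r1 t u.
Proof.
  rewrite <- (Rminus_0_r (light_cone r1 t u)), <- (light_cone_ret_time r1 t).
  unfold light_cone_slope. destruct (Req_EM_T u (ret_time r2 r1 t)) as [->|Hne].
  - ring.
  - field. lra.
Qed.

Lemma light_cone_slope_continuous r1 t :
  continuity_pt (light_cone_slope r1 t) (ret_time r2 r1 t).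
Proof.
  apply difference_quotient_continuous.
  eapply derivable_pt_lim_congr; [intros; reflexivity | | apply light_cone_derivative].
  unfold ret_denom, delay, ret_sep. ring.
Qed.

Lemma light_cone_slope_ret_time r1 t :
  light_cone_slope r1 t (ret_time r2 r1 t) = -2 * ret_denom r1 t.
Proof.
  unfold light_cone_slope. destruct (Req_EM_T _ _) as [_|C]; [reflexivity | congruence].
Qed.

Lemma ret_time_line_derivative r1 t dr dt : inG r2 r1 t ->
  derivable_pt_lim (fun h => ret_time r2 (vadd r1 (vscale h dr)) (t + h * dt)) 0
    ((dt * delay r2 r1 t - dot dr (ret_sep r1 t)) / ret_denom r1 t).
Proof.
  intros HG. pose proof (ret_denom_pos r1 t HG) as Hden.
  set (s := fun h => ret_time r2 (vadd r1 (vscale h dr)) (t + h * dt)).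
  assert (Hs0 : s 0 = ret_time r2 r1 t)
    by (unfold s; rewrite vadd_scale0, Rmult_0_l, Rplus_0_r; reflexivity).
  set (B := fun h => light_cone_slope r1 t (s h)).
  set (A := fun h => dt * (2 * (t - s h) + h * dt)
        - (c1 dr * (2 * (c1 r1 - c1 (r2 (s h))) + h * c1 dr)
         + c2 dr * (2 * (c2 r1 - c2 (r2 (s h))) + h * c2 dr)
         + c3 dr * (2 * (c3 r1 - c3 (r2 (s h))) + h * c3 dr))).
  (* the light-cone equation of (r1 + h dr, t + h dt), minus that of (r1, t) *)
  assert (Hid : forall h, h * A h + (s h - s 0) * B h = 0).
  { intros h. unfold B. rewrite Hs0, <- light_cone_factor.
    destruct (ret_time_spec (vadd r1 (vscale h dr)) (t + h * dt)) as [_ Hsh].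
    fold (s h) in Hsh.
    assert (E : (t + h * dt - s h) * (t + h * dt - s h)
                = dot (vsub (vadd r1 (vscale h dr)) (r2 (s h)))
                      (vsub (vadd r1 (vscale h dr)) (r2 (s h)))).
    { rewrite <- vnorm_sqr.
      replace (t + h * dt - s h) with (vnorm (vsub (vadd r1 (vscale h dr)) (r2 (s h))))
        by lra. reflexivity. }
    unfold A, light_cone. unfold dot, vsub, vadd, vscale, c1, c2, c3 in *; simpl in *.
    nra. }
  assert (Hsc : continuity_pt s 0) by apply ret_time_line_continuous.
  assert (HAc : continuity_pt A 0).
  { pose proof (continuity_pt_comp s _ 0 Hsc (r2_c1_continuous (s 0))).
    pose proof (continuity_pt_comp s _ 0 Hsc (r2_c2_continuous (s 0))).
    pose proof (continuity_pt_comp s _ 0 Hsc (r2_c3_continuous (s 0))).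
    unfold A, comp in *.
    repeat first [ assumption | apply continuity_pt_minus | apply continuity_pt_plus
                 | apply continuity_pt_mult | apply continuity_pt_cst
                 | apply continuity_pt_var ]. }
  assert (HBc : continuity_pt B 0).
  { apply (continuity_pt_comp s (light_cone_slope r1 t)); auto.
    rewrite Hs0. apply light_cone_slope_continuous. }
  assert (HB0 : B 0 = -2 * ret_denom r1 t)
    by (unfold B; rewrite Hs0; apply light_cone_slope_ret_time).
  eapply derivable_pt_lim_congr; [intros; reflexivity | |].
  2:{ apply (derivable_pt_lim_implicit s A B Hid HAc HBc). rewrite HB0. lra. }
  rewrite HB0. unfold A, ret_sep, delay. rewrite Hs0.
  unfold dot, vsub, c1, c2, c3; simpl. field. lra.
Qed.

End RetardedTime.

(** * Expressions closed under partial differentiation *)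

Definition contAt {n : nat} (f : (Fin.t n -> R) -> R) (x : Fin.t n -> R) : Prop :=
  forall eps, eps > 0 -> exists d, d > 0 /\
    forall y, (forall i, Rabs (y i - x i) < d) -> Rabs (f y - f x) < eps.

Lemma contAt_const {n} (a : R) (x : Fin.t n -> R) : contAt (fun _ => a) x.
Proof.
  intros eps He; exists 1; split; [lra|].
  intros; unfold Rminus; rewrite Rplus_opp_r, Rabs_R0; auto.
Qed.

Lemma contAt_coord {n} (j : Fin.t n) x : contAt (fun y => y j) x.
Proof. intros eps He; exists eps; split; auto. Qed.

Lemma contAt_add {n} (f g : (Fin.t n -> R) -> R) x :
  contAt f x -> contAt g x -> contAt (fun y => f y + g y) x.
Proof.
  intros Hf Hg eps He.
  destruct (Hf (eps/2) ltac:(lra)) as [d1 [Hd1 H1]].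
  destruct (Hg (eps/2) ltac:(lra)) as [d2 [Hd2 H2]].
  exists (Rmin d1 d2). split; [apply Rmin_pos; auto|].
  intros y Hy.
  specialize (H1 y (fun i => Rlt_le_trans _ _ _ (Hy i) (Rmin_l _ _))).
  specialize (H2 y (fun i => Rlt_le_trans _ _ _ (Hy i) (Rmin_r _ _))).
  replace (f y + g y - (f x + g x)) with ((f y - f x) + (g y - g x)) by ring.
  eapply Rle_lt_trans; [apply Rabs_triang|]. lra.
Qed.

Lemma contAt_comp {n} (phi : R -> R) (f : (Fin.t n -> R) -> R) x :
  contAt f x -> continuity_pt phi (f x) -> contAt (fun y => phi (f y)) x.
Proof.
  intros Hf Hp eps He.
  destruct (proj1 (continuity_pt_eps phi (f x)) Hp eps He) as [d1 [Hd1 H1]].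
  destruct (Hf d1 Hd1) as [d [Hd H]]. exists d; split; auto.
Qed.

Lemma contAt_mul {n} (f g : (Fin.t n -> R) -> R) x :
  contAt f x -> contAt g x -> contAt (fun y => f y * g y) x.
Proof.
  intros Hf Hg.
  (* polarization: f g = ((f + g)^2 - (f - g)^2) / 4 *)
  replace (fun y => f y * g y)
    with (fun y => /4 * ((f y + g y) ^ 2 + (-1) * (f y + (-1) * g y) ^ 2))
    by (apply functional_extensionality; intros y; field).
  assert (Hlin : forall a z, continuity_pt (fun z => a * z) z)
    by (intros; apply continuity_pt_mult; [apply continuity_pt_cst | apply continuity_pt_var]).
  assert (Hsq : forall a z, continuity_pt (fun z => a * z ^ 2) z)
    by (intros; apply continuity_pt_mult;
        [apply continuity_pt_cst | apply derivable_continuous_pt, derivable_pt_pow]).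
  apply (contAt_comp (fun z => /4 * z)); [|apply Hlin].
  apply contAt_add.
  - apply (contAt_comp (fun z => z ^ 2));
      [apply contAt_add; auto | apply derivable_continuous_pt, derivable_pt_pow].
  - apply (contAt_comp (fun z => (-1) * z ^ 2)); [|apply Hsq].
    apply contAt_add; auto. apply (contAt_comp (fun z => (-1) * z)); auto.
Qed.

Lemma cont_on_of_contAt {n} (U : (Fin.t n -> R) -> Prop) (f : (Fin.t n -> R) -> R) :
  (forall x, U x -> contAt f x) -> cont_on U f.
Proof.
  intros H x Ux eps He. destruct (H x Ux eps He) as [d [Hd Hy]]. exists d; split; auto.
Qed.

Lemma Ck_ext {n} k (U : (Fin.t n -> R) -> Prop) f g :
  (forall x, f x = g x) -> Ck k U f -> Ck k U g.
Proof. intros E. replace g with f; auto. apply functional_extensionality; auto. Qed.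

Definition kron {n} (i j : Fin.t n) : R := if Fin.eq_dec i j then 1 else 0.

Lemma shift0 {n} (x : Fin.t n -> R) i : shift x i 0 = x.
Proof.
  apply functional_extensionality; intros j; unfold shift.
  destruct (Fin.eq_dec i j); ring.
Qed.

Lemma shift_eq {n} (x : Fin.t n -> R) i h j : shift x i h j = x j + h * kron i j.
Proof. unfold shift, kron. destruct (Fin.eq_dec i j); ring. Qed.

Lemma shift_coord_derivative {n} (x : Fin.t n -> R) i j :
  derivable_pt_lim (fun h => shift x i h j) 0 (kron i j).
Proof.
  unfold shift, kron. destruct (Fin.eq_dec i j).
  - eapply derivable_pt_lim_congr; [intros; reflexivity | |
      apply derivable_pt_lim_plus; [apply derivable_pt_lim_const | apply derivable_pt_lim_id]].
    ring.
  - apply derivable_pt_lim_const.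
Qed.

(* Expressions in the coordinates of R^n, a distinguished function [ETau]
   (the retarded time) and derivatives of given functions of one variable:
   [EDer c m e] stands for [D c m (e)], where [D c m] will be the m-th
   derivative of the c-th coordinate of r2.  The class is closed under the
   formal partial derivative [dexpr] once the partials of [ETau] are
   themselves expressions [dtau i]. *)
Inductive expr (n : nat) : Type :=
| ECst (r : R) | ECoord (j : Fin.t n) | ETau | EDer (c m : nat) (e : expr n)
| EAdd (a b : expr n) | EMul (a b : expr n) | EInv (a : expr n).
Arguments ECst {n} r. Arguments ECoord {n} j. Arguments ETau {n}.
Arguments EDer {n} c m e. Arguments EAdd {n} a b. Arguments EMul {n} a b.
Arguments EInv {n} a.

Definition ESub {n} (a b : expr n) : expr n := EAdd a (EMul (ECst (-1)) b).

Section Expressions.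
Variable n : nat.
Variable D : nat -> nat -> R -> R.
Variable tauF : (Fin.t n -> R) -> R.
Variable dtau : Fin.t n -> expr n.
Variable U : (Fin.t n -> R) -> Prop.
Variable N : nat.

Fixpoint eval (e : expr n) (x : Fin.t n -> R) : R :=
  match e with
  | ECst r => r
  | ECoord j => x j
  | ETau => tauF x
  | EDer c m e => D c m (eval e x)
  | EAdd a b => eval a x + eval b x
  | EMul a b => eval a x * eval b x
  | EInv a => / eval a x
  end.

Fixpoint dexpr (i : Fin.t n) (e : expr n) : expr n :=
  match e with
  | ECst _ => ECst 0
  | ECoord j => ECst (kron i j)
  | ETau => dtau i
  | EDer c m e => EMul (EDer c (S m) e) (dexpr i e)
  | EAdd a b => EAdd (dexpr i a) (dexpr i b)
  | EMul a b => EAdd (EMul (dexpr i a) b) (EMul a (dexpr i b))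
  | EInv a => EMul (ECst (-1)) (EMul (dexpr i a) (EMul (EInv a) (EInv a)))
  end.

Fixpoint der_order (e : expr n) : nat :=
  match e with
  | ECst _ | ECoord _ | ETau => 0%nat
  | EDer c m e => Nat.max m (der_order e)
  | EAdd a b | EMul a b => Nat.max (der_order a) (der_order b)
  | EInv a => der_order a
  end.

Fixpoint defined_on (e : expr n) : Prop :=
  match e with
  | ECst _ | ECoord _ | ETau => True
  | EDer c m e => defined_on e
  | EAdd a b | EMul a b => defined_on a /\ defined_on b
  | EInv a => defined_on a /\ forall x, U x -> eval a x <> 0
  end.

Hypothesis D_derivative :
  forall c m, (m < N)%nat -> forall s, derivable_pt_lim (D c m) s (D c (S m) s).
Hypothesis D_continuous : forall c m, (m <= N)%nat -> continuity (D c m).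
Hypothesis tau_continuous : forall x, U x -> contAt tauF x.
Hypothesis tau_derivative : forall x i, U x ->
  derivable_pt_lim (fun h => tauF (shift x i h)) 0 (eval (dtau i) x).
Hypothesis dtau_defined : forall i, defined_on (dtau i).
Hypothesis dtau_order : forall i, (der_order (dtau i) <= 1)%nat.

Lemma eval_contAt e : defined_on e -> (der_order e <= N)%nat ->
  forall x, U x -> contAt (eval e) x.
Proof.
  induction e; simpl; intros Hd Ho x Ux.
  - apply contAt_const.
  - apply contAt_coord.
  - apply tau_continuous; auto.
  - apply (contAt_comp (D c m) (eval e)); [apply IHe; auto; lia | apply D_continuous; lia].
  - destruct Hd. apply contAt_add; [apply IHe1 | apply IHe2]; auto; lia.
  - destruct Hd. apply contAt_mul; [apply IHe1 | apply IHe2]; auto; lia.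
  - destruct Hd as [Hd Hnz]. apply (contAt_comp (fun z => / z) (eval e)); [apply IHe; auto|].
    apply continuity_pt_inv; [apply continuity_pt_var | apply Hnz; auto].
Qed.

Lemma der_order_dexpr i e : (der_order (dexpr i e) <= S (der_order e))%nat.
Proof. pose proof (dtau_order i). induction e; cbn [der_order dexpr]; lia. Qed.

Lemma defined_on_dexpr i e : defined_on e -> defined_on (dexpr i e).
Proof. induction e; simpl; intros; try tauto. apply dtau_defined. Qed.

Lemma eval_partial_derivative e x i : defined_on e -> (der_order e < N)%nat -> U x ->
  derivable_pt_lim (fun h => eval e (shift x i h)) 0 (eval (dexpr i e) x).
Proof.
  revert x. induction e; simpl; intros x Hd Ho Ux.
  - apply derivable_pt_lim_const.
  - apply shift_coord_derivative.
  - apply tau_derivative; auto.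
  - apply derivable_pt_lim_comp; [apply IHe; auto; lia|].
    rewrite shift0. apply D_derivative; lia.
  - destruct Hd. apply derivable_pt_lim_plus; [apply IHe1 | apply IHe2]; auto; lia.
  - destruct Hd. eapply derivable_pt_lim_congr; [intros; reflexivity | |].
    2:{ apply derivable_pt_lim_mult; [apply IHe1 | apply IHe2]; auto; lia. }
    simpl. rewrite shift0. ring.
  - destruct Hd as [Hd Hnz]. eapply derivable_pt_lim_congr; [intros; reflexivity | |].
    2:{ apply derivable_pt_lim_inv; [apply IHe; auto|]. rewrite shift0. apply Hnz; auto. }
    simpl. rewrite shift0. field. apply Hnz; auto.
Qed.

Lemma eval_Ck k : forall e, defined_on e -> (der_order e + k <= N)%nat -> Ck k U (eval e).
Proof.
  induction k as [|k IH]; intros e Hd Ho; simpl.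
  - apply cont_on_of_contAt, eval_contAt; auto; lia.
  - split; [apply cont_on_of_contAt, eval_contAt; auto; lia|].
    intros i. exists (eval (dexpr i e)). split.
    + intros x Ux. apply eval_partial_derivative; auto. lia.
    + apply IH; [apply defined_on_dexpr; auto|]. pose proof (der_order_dexpr i e). lia.
Qed.

End Expressions.

(** * Regularity of phi and psi *)

Notation X1 := (@Fin.F1 3).
Notation X2 := (Fin.FS (@Fin.F1 2)).
Notation X3 := (Fin.FS (Fin.FS (@Fin.F1 1))).
Notation Xt := (Fin.FS (Fin.FS (Fin.FS (@Fin.F1 0)))).

Definition delayE : expr 4 := ESub (ECoord Xt) ETau.
Definition sepE (c : nat) (j : Fin.t 4) : expr 4 := ESub (ECoord j) (EDer c 0 ETau).
Definition denomE : expr 4 :=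
  ESub delayE (EAdd (EAdd (EMul (sepE 0 X1) (EDer 0 1 ETau))
                          (EMul (sepE 1 X2) (EDer 1 1 ETau)))
                    (EMul (sepE 2 X3) (EDer 2 1 ETau))).
Definition dtauE (i : Fin.t 4) : expr 4 :=
  EMul (ESub (EMul (ECst (kron i Xt)) delayE)
             (EAdd (EAdd (EMul (ECst (kron i X1)) (sepE 0 X1))
                         (EMul (ECst (kron i X2)) (sepE 1 X2)))
                   (EMul (ECst (kron i X3)) (sepE 2 X3))))
       (EInv denomE).

Section PhiRegularity.
Variable r2 v : R -> R3.
Hypothesis r2_deriv : forall t, deriv3 r2 t (v t).
Hypothesis speed_bounded :
  forall t1, exists c, c < 1 /\ forall u, u <= t1 -> vnorm (v u) <= c.
Variable D : nat -> nat -> R -> R.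
Hypothesis D0 : forall c s, D c 0%nat s = coord c (r2 s).
Hypothesis D1 : forall c s, D c 1%nat s = coord c (v s).

Definition tau4 (x : Fin.t 4 -> R) : R := ret_time r2 (fst (dec4 x)) (snd (dec4 x)).

Lemma tau4_contAt x : contAt tau4 x.
Proof.
  intros eps He.
  destruct (ret_time_continuous r2 v r2_deriv speed_bounded
              (fst (dec4 x)) (snd (dec4 x)) eps He) as [d [Hd Hc]].
  exists (d / 3). split; [lra|]. intros y Hy. apply Hc.
  - eapply Rle_lt_trans; [apply vnorm_le_sum_abs|].
    unfold dec4, vsub, c1, c2, c3; simpl.
    pose proof (Hy X1); pose proof (Hy X2); pose proof (Hy X3). lra.
  - unfold dec4; simpl. pose proof (Hy Xt). lra.
Qed.

Lemma eval_delayE x : eval 4 D tau4 delayE x = delay r2 (fst (dec4 x)) (snd (dec4 x)).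
Proof. unfold delayE, ESub, delay, tau4; simpl. ring. Qed.

Lemma eval_denomE x : eval 4 D tau4 denomE x = ret_denom r2 v (fst (dec4 x)) (snd (dec4 x)).
Proof.
  unfold denomE, sepE, delayE, ESub; simpl. rewrite !D0, !D1.
  unfold ret_denom, ret_sep, delay, tau4, dot, vsub, dec4, coord, c1, c2, c3; simpl. ring.
Qed.

Lemma tau4_partial_derivative x i : G4 r2 x ->
  derivable_pt_lim (fun h => tau4 (shift x i h)) 0 (eval 4 D tau4 (dtauE i) x).
Proof.
  intros Gx. pose proof (ret_denom_pos r2 v r2_deriv speed_bounded _ _ Gx) as Hden.
  eapply derivable_pt_lim_congr; [ | |
    exact (ret_time_line_derivative r2 v r2_deriv speed_bounded _ _
             (kron i X1, kron i X2, kron i X3) (kron i Xt) Gx)].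
  - intros h. unfold tau4, dec4, vadd, vscale, c1, c2, c3; simpl. rewrite !shift_eq.
    repeat f_equal; ring.
  - unfold dtauE. cbn [eval]. rewrite eval_denomE.
    unfold sepE, ESub. cbn [eval]. rewrite eval_delayE, !D0.
    unfold ret_sep, tau4, dot, vsub, dec4, coord, c1, c2, c3 in *; simpl in *.
    field. lra.
Qed.

Lemma dtauE_defined i : defined_on 4 D tau4 (G4 r2) (dtauE i).
Proof.
  unfold dtauE, denomE, sepE, delayE, ESub. cbn [defined_on]. repeat split; auto.
  intros x Gx. pose proof (eval_denomE x) as E. unfold denomE, sepE, delayE, ESub in E.
  rewrite E. apply Rgt_not_eq, (ret_denom_pos r2 v r2_deriv speed_bounded), Gx.
Qed.

Lemma dtauE_order i : (der_order 4 (dtauE i) <= 1)%nat.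
Proof. unfold dtauE. simpl. lia. Qed.

Variable N : nat.
Hypothesis D_derivative :
  forall c m, (m < N)%nat -> forall s, derivable_pt_lim (D c m) s (D c (S m) s).
Hypothesis D_continuous : forall c m, (m <= N)%nat -> continuity (D c m).

Lemma phiV_Ck k : (k <= N)%nat -> CkMap k (G4 r2) (phiV r2).
Proof.
  intros Hk j.
  assert (Hexpr : forall e, defined_on 4 D tau4 (G4 r2) e -> der_order 4 e = 0%nat ->
                   Ck k (G4 r2) (eval 4 D tau4 e)).
  { intros e He Ho. apply (eval_Ck 4 D tau4 dtauE (G4 r2) N D_derivative D_continuous
      (fun x _ => tau4_contAt x) (fun x i Gx => tau4_partial_derivative x i Gx)
      dtauE_defined dtauE_order k e He). lia. }
  assert (Hedir : forall c (jc : Fin.t 4),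
            Ck k (G4 r2) (eval 4 D tau4 (EMul (EInv delayE) (sepE c jc)))).
  { intros c jc. apply Hexpr; [|reflexivity].
    unfold sepE, delayE, ESub; cbn [defined_on]. repeat split; auto.
    intros x Gx. pose proof (eval_delayE x) as E. unfold delayE, ESub in E. rewrite E.
    unfold G4, inG in Gx. lra. }
  repeat (apply (Fin.caseS' j); [| clear j; intros j]);
    [ apply (Ck_ext k _ (eval 4 D tau4 ETau)); [reflexivity | apply Hexpr; simpl; auto]
    | apply (Ck_ext k _ (eval 4 D tau4 delayE)); [apply eval_delayE|];
      apply Hexpr; unfold delayE, ESub; simpl; auto
    | refine (Ck_ext k _ _ _ _ (Hedir 0%nat X1))
    | refine (Ck_ext k _ _ _ _ (Hedir 1%nat X2))
    | refine (Ck_ext k _ _ _ _ (Hedir 2%nat X3))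
    | destruct (Fin.case0 (fun _ => False) j) ].
  all: intros x; unfold sepE, ESub; cbn [eval]; rewrite eval_delayE, D0;
    unfold phiV, enc5, of_list, phi, edir, vscale, vsub, tau4, dec4, coord, c1, c2, c3;
    simpl; ring.
Qed.

End PhiRegularity.

Notation Ytau := (@Fin.F1 4).
Notation YT := (Fin.FS (@Fin.F1 3)).
Notation Ye1 := (Fin.FS (Fin.FS (@Fin.F1 2))).
Notation Ye2 := (Fin.FS (Fin.FS (Fin.FS (@Fin.F1 1)))).
Notation Ye3 := (Fin.FS (Fin.FS (Fin.FS (Fin.FS (@Fin.F1 0))))).

Definition full_space {n : nat} (x : Fin.t n -> R) : Prop := True.

Lemma open_full_space {n} : open_set (@full_space n).
Proof. intros x _. exists 1. split; [lra | constructor]. Qed.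

Section PsiRegularity.
Variable r2 : R -> R3.
Variable D : nat -> nat -> R -> R.
Hypothesis D0 : forall c s, D c 0%nat s = coord c (r2 s).
Variable N : nat.
Hypothesis D_derivative :
  forall c m, (m < N)%nat -> forall s, derivable_pt_lim (D c m) s (D c (S m) s).
Hypothesis D_continuous : forall c m, (m <= N)%nat -> continuity (D c m).

(* Here the distinguished function [ETau] is the coordinate tau itself. *)
Lemma psiV_Ck k : (k <= N)%nat -> CkMap k full_space (psiV r2).
Proof.
  intros Hk j.
  assert (Hexpr : forall e, defined_on 5 D (fun y => y Ytau) full_space e ->
                   der_order 5 e = 0%nat -> Ck k full_space (eval 5 D (fun y => y Ytau) e)).
  { intros e He Ho.
    apply (eval_Ck 5 D (fun y => y Ytau) (fun i => ECst (kron i Ytau)) full_space N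
      D_derivative D_continuous (fun x _ => contAt_coord Ytau x)
      (fun x i _ => shift_coord_derivative x i Ytau) (fun i => I) (fun i => le_S _ _ (le_n 0))
      k e He). lia. }
  assert (Hr2 : forall c je, Ck k full_space
            (eval 5 D (fun y => y Ytau) (EAdd (EDer c 0 ETau) (EMul (ECoord YT) (ECoord je)))))
    by (intros; apply Hexpr; simpl; auto).
  repeat (apply (Fin.caseS' j); [| clear j; intros j]);
    [ | | | | destruct (Fin.case0 (fun _ => False) j)].
  - refine (Ck_ext k _ _ _ _ (Hr2 0%nat Ye1)); intros y; simpl; rewrite D0; reflexivity.
  - refine (Ck_ext k _ _ _ _ (Hr2 1%nat Ye2)); intros y; simpl; rewrite D0; reflexivity.
  - refine (Ck_ext k _ _ _ _ (Hr2 2%nat Ye3)); intros y; simpl; rewrite D0; reflexivity.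
  - exact (Hexpr (EAdd ETau (ECoord YT)) ltac:(simpl; auto) eq_refl).
Qed.

End PsiRegularity.

Lemma CkMap_on_subset_of_global {n m} k (S : (Fin.t n -> R) -> Prop)
  (F : (Fin.t n -> R) -> (Fin.t m -> R)) :
  CkMap k full_space F -> CkMap_on_subset k S F.
Proof. intros HF y _. exists full_space, F. repeat split; auto using open_full_space. Qed.

Lemma CinfMap_on_subset_of_global {n m} (S : (Fin.t n -> R) -> Prop)
  (F : (Fin.t n -> R) -> (Fin.t m -> R)) :
  CinfMap full_space F -> CinfMap_on_subset S F.
Proof. intros HF y _. exists full_space, F. repeat split; auto using open_full_space. Qed.

Definition derive_eps (g : R -> R) (x : R) : R :=
  epsilon (inhabits 0) (fun l => derivable_pt_lim g x l).

Lemma CkR_continuity k g : CkR k g -> continuity g.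
Proof.
  destruct k as [|k]; simpl; [auto|]. intros [g' [Hg _]] x.
  exact (continuity_pt_of_derivable_pt_lim _ _ _ (Hg x)).
Qed.

Lemma derive_eps_spec k g : CkR (S k) g ->
  (forall x, derivable_pt_lim g x (derive_eps g x)) /\ CkR k (derive_eps g).
Proof.
  intros [g' [Hg Hk]].
  assert (E : derive_eps g = g').
  { apply functional_extensionality; intros x.
    apply (uniqueness_limite g x); [|apply Hg].
    unfold derive_eps. apply epsilon_spec. exists (g' x). apply Hg. }
  rewrite E. auto.
Qed.

Fixpoint iter_derive (f : R -> R) (m : nat) : R -> R :=
  match m with O => f | S m' => derive_eps (iter_derive f m') end.

Lemma iter_derive_CkR N f m : CkR N f -> (m <= N)%nat -> CkR (N - m) (iter_derive f m).
Proof.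
  intros H. induction m as [|m IH]; intros Hm; simpl.
  - rewrite Nat.sub_0_r; exact H.
  - assert (K := IH ltac:(lia)). replace (N - m)%nat with (S (N - S m)) in K by lia.
    exact (proj2 (derive_eps_spec _ _ K)).
Qed.

Lemma iter_derive_derivative N f m : CkR N f -> (m < N)%nat ->
  forall x, derivable_pt_lim (iter_derive f m) x (iter_derive f (S m) x).
Proof.
  intros H Hm. assert (K := iter_derive_CkR N f m H ltac:(lia)).
  replace (N - m)%nat with (S (N - S m)) in K by lia.
  exact (proj1 (derive_eps_spec _ _ K)).
Qed.

Definition r2_derivatives (r2 : R -> R3) (c m : nat) : R -> R :=
  iter_derive (fun s => coord c (r2 s)) m.

Section Smoothness.
Variable r2 : R -> R3.
Variable N : nat.
Hypothesis r2_CkR : forall c, CkR N (fun s => coord c (r2 s)).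

Lemma r2_derivatives_derivative c m : (m < N)%nat ->
  forall s, derivable_pt_lim (r2_derivatives r2 c m) s (r2_derivatives r2 c (S m) s).
Proof. apply iter_derive_derivative, r2_CkR. Qed.

Lemma r2_derivatives_continuous c m : (m <= N)%nat -> continuity (r2_derivatives r2 c m).
Proof. intros Hm. exact (CkR_continuity _ _ (iter_derive_CkR N _ m (r2_CkR c) Hm)). Qed.

Lemma r2_derivatives_one v : (1 <= N)%nat -> (forall t, deriv3 r2 t (v t)) ->
  forall c s, r2_derivatives r2 c 1 s = coord c (v s).
Proof.
  intros HN Hv c s. apply (uniqueness_limite (fun s => coord c (r2 s)) s).
  - exact (r2_derivatives_derivative c 0 HN s).
  - destruct (Hv s) as [H1 [H2 H3]]. destruct c as [|[|c]]; simpl; auto.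
Qed.

Lemma phiV_CkMap v k : (1 <= N)%nat -> (k <= N)%nat ->
  (forall t, deriv3 r2 t (v t)) ->
  (forall t1, exists c, c < 1 /\ forall u, u <= t1 -> vnorm (v u) <= c) ->
  CkMap k (G4 r2) (phiV r2).
Proof.
  intros HN Hk Hv Hsup.
  exact (phiV_Ck r2 v Hv Hsup (r2_derivatives r2) (fun c s => eq_refl)
           (r2_derivatives_one v HN Hv) N r2_derivatives_derivative
           r2_derivatives_continuous k Hk).
Qed.

Lemma psiV_CkMap k : (k <= N)%nat -> CkMap k full_space (psiV r2).
Proof.
  exact (psiV_Ck r2 (r2_derivatives r2) (fun c s => eq_refl) N
           r2_derivatives_derivative r2_derivatives_continuous k).
Qed.

End Smoothness.

Theorem mainTheorem7 (r2 : R -> R3) (Hadm : admissible r2) :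
  (forall r1 t, inG r2 r1 t -> inG1 (phi r2 r1 t)) /\
  (forall p, inG1 p ->
     inG r2 (fst (psi r2 p)) (snd (psi r2 p)) /\
     phi r2 (fst (psi r2 p)) (snd (psi r2 p)) = p) /\
  (forall r1 t, inG r2 r1 t -> psi r2 (phi r2 r1 t) = (r1, t)) /\
  (CkMap 1 (G4 r2) (phiV r2) /\ CkMap_on_subset 1 G1_5 (psiV r2)) /\
  (CinfR3 r2 -> CinfMap (G4 r2) (phiV r2) /\ CinfMap_on_subset G1_5 (psiV r2)).
Proof.
  destruct Hadm as [v [a [_ [Hv [Ha [_ [_ [_ [Hsup _]]]]]]]]].
  assert (HC1 : forall c, CkR 1 (fun s => coord c (r2 s))).
  { intros c. exists (fun s => coord c (v s)).
    split; [intros s | intros s]; destruct (Hv s) as [H1 [H2 H3]];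
      destruct (Ha s) as [K1 [K2 K3]]; destruct c as [|[|c]]; simpl;
      eauto using continuity_pt_of_derivable_pt_lim. }
  split; [exact (phi_in_G1 r2 v Hv Hsup)|].
  split; [exact (phi_psi r2 v Hv Hsup)|].
  split; [exact (psi_phi r2)|].
  split.
  - split; [exact (phiV_CkMap r2 1 HC1 v 1 (le_n 1) (le_n 1) Hv Hsup)|].
    exact (CkMap_on_subset_of_global 1 G1_5 _ (psiV_CkMap r2 1 HC1 1 (le_n 1))).
  - intros Hinf.
    assert (HCk : forall k c, CkR k (fun s => coord c (r2 s))).
    { intros k c. destruct (Hinf k) as [H1 [H2 H3]]. destruct c as [|[|c]]; assumption. }
    split.
    + intros k. exact (phiV_CkMap r2 (S k) (HCk (S k)) v k ltac:(lia) ltac:(lia) Hv Hsup).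
    + apply CinfMap_on_subset_of_global. intros k. exact (psiV_CkMap r2 k (HCk k) k (le_n k)).
Qed.
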